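(* Let $V$ be a real-valued function on the set of all games (as defined in the context) that satisfies Constancy, Dominance, Additivity, Continuity and Indifference. Let $G=(\mathbf{c},\mathbf{r})$ be a game with $n$ outcomes such that $c_i=c_1$ for all $i=1,\dots,n$. Then \[ V(G)=\frac1n\sum_{i=1}^n r_i. \]
   Context: A game with $n$ outcomes ($n\ge1$) is a pair $G=(\mathbf{c},\mathbf{r})$ with $\mathbf{c}\in\mathbb{C}^n$ and $\mathbf{r}\in\mathbb{R}^n$; $V$ assigns a real number to each game. Axioms: Constancy: if $r_i=r_1$ for all $i$, then $V(\mathbf{c},\mathbf{r})=r_1$. Dominance: if $\mathbf{r}\ge\mathbf{r}'$ componentwise, then $V(\mathbf{c},\mathbf{r})\ge V(\mathbf{c},\mathbf{r}')$. Additivity: $V(\mathbf{c},\mathbf{r}+\mathbf{r}')=V(\mathbf{c},\mathbf{r})+V(\mathbf{c},\mathbf{r}')$. Continuity: if games $G_k$ with $n$ outcomes converge to a game $G$ with $n$ outcomes in the metric induced by $\|(\mathbf{c},\mathbf{r})\|:=\|\mathbf{c}\|_3+\|\mathbf{r}\|_1$, then $V(G)=\lim_k V(G_k)$. Indifference: for every permutation $\sigma$ of $\{1,\dots,n\}$, $V(\sigma(\mathbf{c}),\sigma(\mathbf{r}))=V(\mathbf{c},\mathbf{r})$, where $\sigma$ acts on vectors by permuting their components, $(\sigma(\mathbf{v}))_i=v_{\sigma(i)}$. *)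

From HB Require Import structures.
From mathcomp Require Import all_boot all_order all_algebra all_fingroup.
From mathcomp Require Import all_classical all_reals all_analysis.
Set Implicit Arguments. Unset Strict Implicit. Unset Printing Implicit Defensive.
Import Order.TTheory GRing.Theory Num.Theory.
Import numFieldNormedType.Exports.
Local Open Scope ring_scope.
Local Open Scope classical_set_scope.

(* Complex numbers represented as pairs (real part, imaginary part). *)
Definition cplx (R : realType) := (R * R)%type.
Definition cmod (R : realType) (z : cplx R) : R := Num.sqrt (z.1 ^+ 2 + z.2 ^+ 2).
Definition csub (R : realType) (z w : cplx R) : cplx R := (z.1 - w.1, z.2 - w.2).

Definition game (R : realType) (n : nat) := (('I_n -> cplx R) * ('I_n -> R))%type.

Definition norm3 (R : realType) n (c : 'I_n -> cplx R) : R :=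
  (\sum_(i < n) cmod (c i) ^+ 3) `^ (3%:R)^-1.
Definition norm1 (R : realType) n (r : 'I_n -> R) : R := \sum_(i < n) `|r i|.

Definition game_dist (R : realType) n (G H : game R n) : R :=
  norm3 (fun i => csub (G.1 i) (H.1 i)) + norm1 (fun i => G.2 i - H.2 i).

Definition pact (T : Type) n (s : {perm 'I_n}) (v : 'I_n -> T) : 'I_n -> T :=
  fun i => v (s i).

(* V assigns a real number to each game (of any number of outcomes);
   games have n >= 1 outcomes, so axioms are stated for n.+1. *)
Definition value_fun (R : realType) := forall n : nat, game R n -> R.

Definition Constancy (R : realType) (V : value_fun R) : Prop :=
  forall n (c : 'I_n.+1 -> cplx R) (r : 'I_n.+1 -> R),
    (forall i, r i = r ord0) -> V n.+1 (c, r) = r ord0.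

Definition Dominance (R : realType) (V : value_fun R) : Prop :=
  forall n (c : 'I_n.+1 -> cplx R) (r r' : 'I_n.+1 -> R),
    (forall i, r' i <= r i) -> V n.+1 (c, r') <= V n.+1 (c, r).

Definition Additivity (R : realType) (V : value_fun R) : Prop :=
  forall n (c : 'I_n.+1 -> cplx R) (r r' : 'I_n.+1 -> R),
    V n.+1 (c, fun i => r i + r' i) = V n.+1 (c, r) + V n.+1 (c, r').

Definition Continuity (R : realType) (V : value_fun R) : Prop :=
  forall n (Gk : nat -> game R n.+1) (G : game R n.+1),
    (fun k => game_dist (Gk k) G) @ \oo --> (0 : R) ->
    (fun k => V n.+1 (Gk k)) @ \oo --> V n.+1 G.

Definition Indifference (R : realType) (V : value_fun R) : Prop :=
  forall n (s : {perm 'I_n.+1}) (c : 'I_n.+1 -> cplx R) (r : 'I_n.+1 -> R),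
    V n.+1 (pact s c, pact s r) = V n.+1 (c, r).

From HB Require Import structures.
From mathcomp Require Import all_boot all_order all_algebra all_fingroup.
From mathcomp Require Import all_classical all_reals all_analysis.
Import Order.TTheory GRing.Theory Num.Theory.
Local Open Scope ring_scope.

(* When all outcomes share the same c, every permutation of the outcomes fixes
   c, so Indifference makes V (c, .) invariant under permuting the rewards.
   The n cyclic shifts of r add up to the constant reward \sum_i r i, so
   Additivity gives n * V (c, r) = V (c, fun=> \sum_i r i) = \sum_i r i. *)

Section ValueOfConstantCGame.

Variables (R : realType) (V : value_fun R).
Hypotheses (hC : Constancy V) (hA : Additivity V) (hI : Indifference V).
Variables (n : nat) (c : 'I_n.+1 -> cplx R).

Lemma value_cst (x : R) : V n.+1 (c, fun=> x) = x.
Proof. exact: hC. Qed.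

Lemma value_sum (I : Type) (s : seq I) (P : pred I) (g : I -> 'I_n.+1 -> R) :
  V n.+1 (c, \sum_(k <- s | P k) g k) = \sum_(k <- s | P k) V n.+1 (c, g k).
Proof.
apply: (big_morph (fun r => V n.+1 (c, r))) => [r r'|]; first exact: hA.
exact: value_cst.
Qed.

Lemma value_pact_const (s : {perm 'I_n.+1}) (r : 'I_n.+1 -> R) :
  (forall i, c i = c ord0) -> V n.+1 (c, pact s r) = V n.+1 (c, r).
Proof.
move=> c_const; rewrite -[in RHS](hI _ s).
by congr (V _ (_, _)); apply: funext => i; rewrite /pact c_const [RHS]c_const.
Qed.

Definition shift_perm (k : 'I_n.+1) : {perm 'I_n.+1} := perm (addIr k).

Lemma sum_pact_shift (r : 'I_n.+1 -> R) :
  \sum_(k < n.+1) pact (shift_perm k) r = fun=> \sum_(j < n.+1) r j.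
Proof.
rewrite fct_sumE; apply: funext => i.
rewrite [RHS](reindex_inj (addrI i)); apply: eq_bigr => k _.
by rewrite /pact permE.
Qed.

End ValueOfConstantCGame.

Arguments shift_perm {n} k.

Theorem lemma2 (R : realType) (V : value_fun R)
  (hC : Constancy V) (hD : Dominance V) (hA : Additivity V)
  (hK : Continuity V) (hI : Indifference V)
  (n : nat) (c : 'I_n.+1 -> cplx R) (r : 'I_n.+1 -> R) :
  (forall i, c i = c ord0) ->
  V n.+1 (c, r) = (n.+1%:R)^-1 * \sum_(i < n.+1) r i.
Proof.
move=> c_const.
have shifts_sum : V n.+1 (c, \sum_(k < n.+1) pact (shift_perm k) r)
    = n.+1%:R * V n.+1 (c, r).
  rewrite value_sum //.
  under eq_bigr => k _ do rewrite value_pact_const //.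
  by rewrite sumr_const card_ord mulr_natl.
rewrite sum_pact_shift value_cst // in shifts_sum.
by rewrite shifts_sum mulrA mulVf ?mul1r // pnatr_eq0.
Qed.
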